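(* Let $n$ be a positive integer. Then $\mathsf{NAADT}(\mathsf{OMB}_n) = n$. Moreover, $\mathrm{spar}(\mathsf{OMB}_n) = n$ if $n$ is even, and $\mathrm{spar}(\mathsf{OMB}_n) = n+1$ if $n$ is odd.
   Context: $\mathsf{OMB}_n:\{0,1\}^n\to\{0,1\}$ is defined by $\mathsf{OMB}_n(x)=1$ if $\max\{i\in[n]:x_i=0\}$ is odd and $0$ otherwise, with $\mathsf{OMB}_n(1^n)=0$. $\mathsf{AND}_S(x)=\prod_{i\in S}x_i$. $\mathsf{NAADT}(f)$ is the minimum $k$ for which there exist $S_1,\dots,S_k\subseteq[n]$ such that $f(x)$ is determined by $\mathsf{AND}_{S_1}(x),\dots,\mathsf{AND}_{S_k}(x)$ for all $x$. $\mathrm{spar}(f)$ is the number of nonzero coefficients $\widetilde f(S)$ in the unique expansion $f=\sum_{S\subseteq[n]}\widetilde f(S)\mathsf{AND}_S$ with real coefficients. *)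

From HB Require Import structures.
From mathcomp Require Import all_boot all_order all_algebra.
From mathcomp Require Import reals.
Set Implicit Arguments. Unset Strict Implicit. Unset Printing Implicit Defensive.
Import Order.TTheory GRing.Theory Num.Theory.

(* Inputs x in {0,1}^n are finite functions 'I_n -> bool; coordinate i : 'I_n
   stands for the paper's coordinate i+1 in [n]; true = 1, false = 0. *)
Notation cube n := {ffun 'I_n -> bool}.

(* max{ i in [n] : x_i = 0 } (1-based), with value 0 when x = 1^n. *)
Definition last_zero n (x : cube n) : nat := \max_(i : 'I_n | ~~ x i) i.+1.

Definition OMB n (x : cube n) : bool := odd (last_zero x).

Definition ANDS n (S : {set 'I_n}) (x : cube n) : bool := [forall i in S, x i].

Definition determined_by n (f : cube n -> bool) k (S : {ffun 'I_k -> {set 'I_n}}) : bool :=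
  [forall x : cube n, forall y : cube n,
     [forall j : 'I_k, ANDS (S j) x == ANDS (S j) y] ==> (f x == f y)].

Definition naadt_ok n (f : cube n -> bool) (k : nat) : bool :=
  [exists S : {ffun 'I_k -> {set 'I_n}}, determined_by f S].

Lemma naadt_ok_exists n (f : cube n -> bool) : exists k, naadt_ok f k.
Proof.
exists n; apply/existsP; exists [ffun i => [set i]].
apply/forallP => x; apply/forallP => y; apply/implyP => /forallP H.
have -> : x = y.
  apply/ffunP => i; have /eqP := H i; rewrite /ANDS !ffunE.
  have E z : [forall j in [set i], z j] = z i.
    apply/forallP/idP => [/(_ i)|zi j]; first by rewrite in_set1 eqxx.
    by apply/implyP; rewrite in_set1 => /eqP ->.
  by rewrite !E.
by [].
Qed.

Definition NAADT n (f : cube n -> bool) : nat := ex_minn (naadt_ok_exists f).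

Definition AND_expansion (R : realType) n (f : cube n -> bool)
    (c : {ffun {set 'I_n} -> R}) : Prop :=
  forall x : cube n, ((f x)%:R = \sum_(S : {set 'I_n}) c S * (ANDS S x)%:R)%R.

(* spar(f) = k : the (unique) AND-expansion of f exists, and it has exactly k
   nonzero coefficients (stated for every expansion, so uniqueness is not
   assumed). *)
Definition spar_is (R : realType) n (f : cube n -> bool) (k : nat) : Prop :=
  (exists c : {ffun {set 'I_n} -> R}, AND_expansion f c) /\
  (forall c : {ffun {set 'I_n} -> R}, AND_expansion f c ->
     #|[set S : {set 'I_n} | c S != 0%R]| = k).

From HB Require Import structures.
From mathcomp Require Import all_boot all_order all_algebra.
From mathcomp Require Import reals.
Set Implicit Arguments. Unset Strict Implicit. Unset Printing Implicit Defensive.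
Import Order.TTheory GRing.Theory Num.Theory.

(* Lower bound: each S_j has at most one minimum, so with fewer than n sets some
   coordinate p is the minimum of none of them. The inputs 0^p 1^(n-p) and
   0^(p+1) 1^(n-p-1) then agree on every AND_{S_j} (a set containing p also
   contains a smaller coordinate, where both inputs vanish), while their last
   zeros p and p+1 have opposite parity.
   Sparsity: AND over the suffix {m+1, ..., n} tests "last zero <= m", so Abel
   summation writes OMB_n as a combination of these n+1 ANDs with coefficients
   g(m) - g(m+1), where g(m) = [m odd and m <= n]; only the coefficient of
   m = n can vanish, exactly when n is even. Expansions are unique, by
   evaluation at the indicators of sets of increasing size. *)

Lemma NAADT_eq n (f : cube n -> bool) k :
  naadt_ok f k -> (forall j, j < k -> ~~ naadt_ok f j) -> NAADT f = k.
Proof.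
move=> okk minj; rewrite /NAADT; case: ex_minnP => m okm minm.
apply/eqP; rewrite eqn_leq minm //= leqNgt.
by apply/negP => /minj; rewrite okm.
Qed.

Lemma eq_ANDS n (S : {set 'I_n}) (x y : cube n) :
  {in S, x =1 y} -> ANDS S x = ANDS S y.
Proof.
move=> eq_xy; apply: eq_forallb => i.
by case: (boolP (i \in S)) => // /eq_xy ->.
Qed.

Lemma ANDS_set1 n (i : 'I_n) (x : cube n) : ANDS [set i] x = x i.
Proof.
apply/forallP/idP => [/(_ i)|xi j]; first by rewrite set11.
by apply/implyP; rewrite in_set1 => /eqP ->.
Qed.

Lemma determined_by_set1 n (f : cube n -> bool) :
  determined_by f [ffun i => [set i]].
Proof.
apply/forallP => x; apply/forallP => y; apply/implyP => /forallP eq_xy.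
suff -> : x = y by [].
by apply/ffunP => i; have := eq_xy i; rewrite ffunE !ANDS_set1 => /eqP.
Qed.

Definition minima n (A : {set 'I_n}) : {set 'I_n} :=
  [set p in A | [forall q in A, p <= q]].

Lemma card_minima_le1 n (A : {set 'I_n}) : #|minima A| <= 1.
Proof.
apply/card_le1_eqP => p q; rewrite !inE => /andP[pA /forall_inP p_min].
move=> /andP[qA /forall_inP q_min]; apply/val_inj/eqP.
by rewrite eqn_leq p_min ?q_min.
Qed.

Lemma card_bigcup_le (I T : finType) (A : I -> {set T}) :
  #|\bigcup_i A i| <= \sum_i #|A i|.
Proof.
elim/big_ind2: _ => [|s1 B1 s2 B2 le1 le2|//]; first by rewrite cards0.
exact: leq_trans (leq_card_setU B1 B2).1 (leq_add le1 le2).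
Qed.

Lemma exists_nonminimum n k (S : 'I_k -> {set 'I_n}) : k < n ->
  exists p : 'I_n, forall j, p \in S j -> exists2 q, q \in S j & q < p.
Proof.
move=> lt_kn; pose M := \bigcup_j minima (S j).
have lt_Mn : #|M| < #|~: M| + #|M|.
  apply: (leq_ltn_trans (card_bigcup_le _)); rewrite addnC cardsC card_ord.
  apply: leq_ltn_trans lt_kn; rewrite -[X in _ <= X]card_ord -sum1_card.
  by apply: leq_sum => j _; exact: card_minima_le1.
have [p pNM] : exists p, p \in ~: M.
  by apply/card_gt0P; rewrite -(ltn_add2r #|M|).
exists p => j pSj; apply/exists_inP; apply: contraTT pNM.
rewrite negb_exists_in => /forall_inP p_min; rewrite inE negbK.
apply/bigcupP; exists j => //; rewrite inE pSj; apply/forall_inP => q qSj.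
by rewrite leqNgt p_min.
Qed.

Definition threshold n (m : nat) : cube n := [ffun i : 'I_n => m <= i].

Lemma last_zero_threshold n m : m <= n -> last_zero (threshold n m) = m.
Proof.
move=> le_mn; apply/eqP; rewrite eqn_leq; apply/andP; split.
  by apply/bigmax_leqP => i; rewrite ffunE -ltnNge.
case: m le_mn => [|m] lt_mn //.
by apply: (leq_bigmax_cond (Ordinal lt_mn)); rewrite ffunE /= ltnn.
Qed.

Lemma OMB_not_determined n k (S : {ffun 'I_k -> {set 'I_n}}) :
  k < n -> ~~ determined_by (@OMB n) S.
Proof.
move=> /(exists_nonminimum S) [p p_nonmin].
have same_ANDS j : ANDS (S j) (threshold n p) = ANDS (S j) (threshold n p.+1).
  have [pSj|pNSj] := boolP (p \in S j).
    have [q qSj lt_qp] := p_nonmin j pSj.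
    have ANDS_false m : p <= m -> ANDS (S j) (threshold n m) = false.
      move=> le_pm; apply/forall_inP => /(_ q qSj); rewrite ffunE leqNgt.
      by rewrite (leq_trans lt_qp le_pm).
    by rewrite !ANDS_false.
  apply: eq_ANDS => i iSj; have p_neq_i : (p : nat) != i.
    by apply: contraNneq pNSj => /val_inj ->.
  by rewrite !ffunE ltn_neqAle p_neq_i.
apply/negP => /forallP/(_ (threshold n p))/forallP/(_ (threshold n p.+1)).
rewrite (introT forallP (fun j => introT eqP (same_ANDS j))) /OMB.
rewrite !last_zero_threshold ?(ltnW (ltn_ord p)) // oddS.
by case: (odd p).
Qed.

Lemma naadt_ok_self n (f : cube n -> bool) : naadt_ok f n.
Proof. by apply/existsP; exists [ffun i => [set i]]; apply: determined_by_set1. Qed.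

Lemma NAADT_OMB n : NAADT (@OMB n) = n.
Proof.
apply: NAADT_eq; first exact: naadt_ok_self.
by move=> k lt_kn; apply/existsPn => S; exact: OMB_not_determined.
Qed.

Local Open Scope ring_scope.

Lemma AND_sum_eq0 (R : pzRingType) n (d : {set 'I_n} -> R) :
  (forall x : cube n, \sum_(S : {set 'I_n}) d S * (ANDS S x)%:R = 0) ->
  forall S, d S = 0.
Proof.
move=> sum_eq0.
have ANDS_indicator (S T : {set 'I_n}) :
    ANDS T [ffun i => i \in S] = (T \subset S).
  by apply/forall_inP/subsetP => sub_TS i /sub_TS; rewrite ?ffunE.
suff d_eq0 m (S : {set 'I_n}) : (#|S| < m)%N -> d S = 0.
  by move=> S; exact: d_eq0 #|S|.+1 S (ltnSn _).
elim: m S => [//|m IHm] S lt_Sm.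
have := sum_eq0 [ffun i => i \in S].
rewrite (bigD1 S) //= big1 ?addr0 => [|T neq_TS].
  by rewrite ANDS_indicator subxx mulr1.
rewrite ANDS_indicator.
have [sub_TS|_] := boolP (T \subset S); last by rewrite mulr0.
have lt_TS : (#|T| < #|S|)%N by rewrite proper_card // properEneq neq_TS.
by rewrite IHm ?mul0r // (leq_trans lt_TS).
Qed.

Lemma AND_expansion_uniq (R : realType) n (f : cube n -> bool)
    (c1 c2 : {ffun {set 'I_n} -> R}) :
  AND_expansion f c1 -> AND_expansion f c2 -> c1 = c2.
Proof.
move=> exp1 exp2; apply/ffunP => S; apply/eqP; rewrite -subr_eq0; apply/eqP.
apply: (@AND_sum_eq0 _ _ (fun S => c1 S - c2 S)) => x.
under eq_bigr do rewrite mulrBl.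
by rewrite sumrB -exp1 -exp2 subrr.
Qed.

Lemma spar_is_support (R : realType) n (f : cube n -> bool)
    (c : {ffun {set 'I_n} -> R}) :
  AND_expansion f c -> spar_is R f #|[set S | c S != 0]|.
Proof.
move=> exp_c; split; first by exists c.
by move=> c' /(AND_expansion_uniq exp_c) ->.
Qed.

Definition suffix n (m : nat) : {set 'I_n} := [set i : 'I_n | (m <= i)%N].

Lemma ANDS_suffix n m (x : cube n) :
  ANDS (suffix n m) x = (last_zero x <= m)%N.
Proof.
apply/forall_inP/bigmax_leqP => [x_suffix i xNi|le_m i].
  by rewrite ltnNge; apply: contra xNi => le_mi; apply: x_suffix; rewrite inE.
by rewrite inE => le_mi; apply: contraT => /le_m; rewrite leqNgt ltnS le_mi.
Qed.

Lemma last_zero_le n (x : cube n) : (last_zero x <= n)%N.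
Proof. by apply/bigmax_leqP => i _; exact: ltn_ord. Qed.

Lemma suffix_inj n : injective (fun m : 'I_n.+1 => suffix n m).
Proof.
have le_suffix (a b : 'I_n.+1) : suffix n a = suffix n b -> (a <= b)%N.
  move=> eq_ab; rewrite leqNgt; apply/negP => lt_ba.
  have lt_bn : (b < n)%N := leq_trans lt_ba (ltn_ord a).
  have := congr1 (fun A : {set 'I_n} => Ordinal lt_bn \in A) eq_ab.
  by rewrite !inE /= leqnn leqNgt lt_ba.
by move=> a b eq_ab; apply/val_inj/eqP; rewrite eqn_leq !le_suffix.
Qed.

Section OMBExpansion.
Variable R : nzRingType.

Definition odd_upto n m : R := (odd m && (m <= n)%N)%:R.

Definition omb_coef n m : R := odd_upto n m - odd_upto n m.+1.

Definition omb_expansion n : {ffun {set 'I_n} -> R} :=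
  [ffun S => \sum_(m < n.+1 | S == suffix n m) omb_coef n m].

Lemma sum_omb_coef_ge n L : (L <= n)%N ->
  \sum_(m < n.+1) omb_coef n m * (L <= m)%N%:R = (odd L)%:R.
Proof.
move=> le_Ln.
transitivity (\sum_(L <= m < n.+1) omb_coef n m).
  rewrite big_geq_mkord [RHS]big_mkcond; apply: eq_bigr => m _.
  by case: (L <= m)%N; rewrite ?mulr1 ?mulr0.
rewrite (telescope_sumr_eq (fun m => - odd_upto n m)) ?leqW //; last first.
  by move=> m _; rewrite /omb_coef opprK addrC.
by rewrite /odd_upto ltnn andbF oppr0 add0r opprK le_Ln andbT.
Qed.

Lemma omb_coef_eq0 n m : (m <= n)%N ->
  (omb_coef n m == 0) = (m == n) && ~~ odd n.
Proof.
move=> le_mn; rewrite /omb_coef /odd_upto oddS le_mn andbT.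
move: le_mn; rewrite leq_eqVlt => /orP[/eqP-> | lt_mn].
  rewrite eqxx ltnn andbF subr0.
  by case: (odd n); [rewrite mulr1n oner_eq0 | rewrite mulr0n eqxx].
rewrite lt_mn (ltn_eqF lt_mn) andbT.
case: (odd m); first by rewrite mulr1n mulr0n subr0 oner_eq0.
by rewrite mulr0n mulr1n sub0r oppr_eq0 oner_eq0.
Qed.

Lemma omb_expansion_suffix n (m : 'I_n.+1) :
  omb_expansion n (suffix n m) = omb_coef n m.
Proof.
rewrite ffunE (big_pred1 m) // => m' /=.
by apply/eqP/eqP => [/suffix_inj | ->].
Qed.

Lemma card_support_omb_expansion n :
  #|[set S | omb_expansion n S != 0]| = if odd n then n.+1 else n.
Proof.
have -> : [set S | omb_expansion n S != 0] =
    (fun m : 'I_n.+1 => suffix n m) @: [set m : 'I_n.+1 | omb_coef n m != 0].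
  apply/setP => S; rewrite inE; apply/idP/imsetP => [|[m]].
    case: (pickP (fun m : 'I_n.+1 => S == suffix n m)) => [m /eqP -> | none].
      by rewrite omb_expansion_suffix => nz_m; exists m; rewrite ?inE.
    by rewrite ffunE big_pred0 ?eqxx.
  by rewrite inE => nz_m ->; rewrite omb_expansion_suffix.
rewrite card_imset; last exact: suffix_inj.
have nz_coef (m : 'I_n.+1) : (omb_coef n m != 0) = (m != ord_max) || odd n.
  by rewrite omb_coef_eq0 ?negb_and ?negbK // -ltnS.
under eq_finset do rewrite nz_coef.
case: (odd n).
  by under eq_finset do rewrite orbT; rewrite cardsT card_ord.
under eq_finset do rewrite orbF.
have -> : [set m : 'I_n.+1 | m != ord_max] = [set~ ord_max].
  by apply/setP => m; rewrite !inE.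
by rewrite cardsC1 card_ord.
Qed.

End OMBExpansion.

Lemma omb_expansionP (R : realType) n :
  AND_expansion (@OMB n) (omb_expansion R n).
Proof.
move=> x; under eq_bigr do rewrite ffunE big_mkcond mulr_suml.
rewrite exchange_big /OMB -(sum_omb_coef_ge R (last_zero_le x)).
apply: eq_bigr => m _; rewrite (bigD1 (suffix n m)) //= eqxx ANDS_suffix.
by rewrite big1 ?addr0 // => S /negbTE ->; rewrite mul0r.
Qed.

Local Close Scope ring_scope.

Theorem claim4p6 (n : nat) (hn : 0 < n) :
  NAADT (@OMB n) = n /\
  (forall R : realType, spar_is R (@OMB n) (if odd n then n.+1 else n)).
Proof.
split; first exact: NAADT_OMB.
move=> R; rewrite -(card_support_omb_expansion R).
apply: spar_is_support; exact: omb_expansionP.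
Qed.
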